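(* Let $\rho_{12},\rho_{23},\rho_{34},\rho_{45}\in\mathbb{F}\setminus\{\frac12\}$, and let $\mathbf{A}$ be the 5-dimensional LV algebra with natural basis $e_1,\dots,e_5$ in which $e_ie_{i+1}=\rho_{i,i+1}e_i+(1-\rho_{i,i+1})e_{i+1}$ for $i=1,2,3,4$, and $e_ie_j=\frac12(e_i+e_j)$ for all other pairs $i,j$ (i.e. for $\{i,j\}\in\{\{1,3\},\{1,4\},\{1,5\},\{2,4\},\{2,5\},\{3,5\}\}$ and $i=j$). Then $\mathrm{Der}(\mathbf{A})=\{0\}$.
   Context: Let $\mathbb{F}$ be a field of characteristic different from $2$. A Lotka–Volterra (LV) algebra of dimension $5$ over $\mathbb{F}$ is a commutative (not necessarily associative) $\mathbb{F}$-algebra $\mathbf{A}$ with a basis $e_1,\dots,e_5$ (the natural basis) such that $e_ie_j=\alpha_{ij}e_i+\alpha_{ji}e_j$ with $\alpha_{ij}\in\mathbb{F}$, $\alpha_{ii}=\frac12$ and $\alpha_{ij}+\alpha_{ji}=1$ for all $i,j$. A derivation is a linear map $D:\mathbf{A}\to\mathbf{A}$ with $D(uv)=D(u)v+uD(v)$ for all $u,v$; $\mathrm{Der}(\mathbf{A})$ is the set of derivations. *)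

From HB Require Import structures.
From mathcomp Require Import all_boot all_order all_algebra.
Set Implicit Arguments. Unset Strict Implicit. Unset Printing Implicit Defensive.
Import GRing.Theory.
Local Open Scope ring_scope.

(* The algebra A is F^5, elements are row vectors 'rV[F]_5; the natural basis
   vector e_i is delta_mx 0 i. *)
Definition lv_e (F : fieldType) (i : 'I_5) : 'rV[F]_5 := delta_mx 0 i.

Definition lv_mul (F : fieldType) (alpha : 'I_5 -> 'I_5 -> F)
    (u v : 'rV[F]_5) : 'rV[F]_5 :=
  \sum_(i < 5) \sum_(j < 5)
     (u 0 i * v 0 j) *: (alpha i j *: lv_e F i + alpha j i *: lv_e F j).

Definition is_LV_alpha (F : fieldType) (alpha : 'I_5 -> 'I_5 -> F) : Prop :=
  (forall i, alpha i i = 2^-1) /\ (forall i j, alpha i j + alpha j i = 1).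

(* Structure constants of the chain LV algebra of the theorem (indices 0..4
   correspond to e_1..e_5). *)
Definition chain_alpha (F : fieldType) (r12 r23 r34 r45 : F)
    (i j : 'I_5) : F :=
  match (nat_of_ord i, nat_of_ord j) : nat * nat with
  | (0, 1)%N => r12 | (1, 0)%N => 1 - r12
  | (1, 2)%N => r23 | (2, 1)%N => 1 - r23
  | (2, 3)%N => r34 | (3, 2)%N => 1 - r34
  | (3, 4)%N => r45 | (4, 3)%N => 1 - r45
  | _ => 2^-1
  end.

(* A linear map D : A -> A is represented by a matrix acting on row vectors,
   u |-> u *m D. It is a derivation if D(uv) = D(u)v + uD(v). *)
Definition is_derivation (F : fieldType) (mul : 'rV[F]_5 -> 'rV[F]_5 -> 'rV[F]_5)
    (D : 'M[F]_5) : Prop :=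
  forall u v, mul u v *m D = mul (u *m D) v + mul u (v *m D).

(* Comparing the coefficients of [e_k] in [D(e_a e_b) = D(e_a) e_b + e_a D(e_b)]
   for [k] distinct from [a] and [b] gives the linear relation
   [(α_ab - α_kb) d_ak + (α_ba - α_ka) d_bk = 0] between entries of [D].
   With [a = b] it kills [d_ak] whenever [α_ka ≠ α_aa = 1/2], i.e. for the chain
   neighbours [k] of [a]; once [d_bk = 0] is known it kills [d_ak] whenever
   [α_ab ≠ α_kb].  Along the chain these two rules reach every off-diagonal
   entry.  Finally [a = b = k] gives [Σ_j α_aj d_aj = 0], which leaves
   [α_aa d_aa = 0] on the diagonal. *)

From HB Require Import structures.
From mathcomp Require Import all_boot all_order all_algebra.
From mathcomp Require Import ring.
Set Implicit Arguments.
Unset Strict Implicit.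
Unset Printing Implicit Defensive.

Import GRing.Theory.
Local Open Scope ring_scope.

Section LVProduct.
Variable F : fieldType.
Implicit Types (alpha : 'I_5 -> 'I_5 -> F) (u v : 'rV[F]_5) (f : 'I_5 -> F).

Lemma lv_e_entry a j : lv_e F a 0 j = (a == j)%:R.
Proof. by rewrite /lv_e mxE eqxx eq_sym. Qed.

Lemma sum_natr_eql f k : \sum_i (k == i)%:R * f i = f k.
Proof.
rewrite (bigD1 k) //= eqxx mul1r big1 ?addr0 // => i.
by rewrite eq_sym => /negbTE ->; rewrite mul0r.
Qed.

Lemma sum_natr_eqr f k : \sum_i f i * (k == i)%:R = f k.
Proof. by rewrite -[RHS]sum_natr_eql; apply: eq_bigr => i _; rewrite mulrC. Qed.

Lemma sum_mul_lv_e f a : \sum_j f j * lv_e F a 0 j = f a.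
Proof. by under eq_bigr => j _ do rewrite lv_e_entry; rewrite sum_natr_eqr. Qed.

Lemma sum_mul_row_entry f (D : 'M[F]_5) c :
  \sum_j f j * row c D 0 j = \sum_j f j * D c j.
Proof. by apply: eq_bigr => j _; rewrite mxE. Qed.

Lemma lv_mul_entry alpha u v k :
  lv_mul alpha u v 0 k =
  u 0 k * \sum_j alpha k j * v 0 j + v 0 k * \sum_i alpha k i * u 0 i.
Proof.
rewrite /lv_mul summxE.
under eq_bigr => i _ do rewrite summxE.
under eq_bigr => i _ do under eq_bigr => j _ do rewrite !mxE eqxx.
transitivity (\sum_i \sum_j ((k == i)%:R * (u 0 i * v 0 j * alpha i j)
                + (k == j)%:R * (u 0 i * v 0 j * alpha j i))).
  by apply: eq_bigr => i _; apply: eq_bigr => j _; ring.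
under eq_bigr => i _ do rewrite big_split /=.
rewrite big_split /= [X in _ + X]exchange_big /=.
under eq_bigr => i _ do rewrite -mulr_sumr.
under [X in _ + X]eq_bigr => j _ do rewrite -mulr_sumr.
rewrite !sum_natr_eql !mulr_sumr.
by congr (_ + _); apply: eq_bigr => j _; ring.
Qed.

Lemma lv_mul_lv_e alpha a b :
  lv_mul alpha (lv_e F a) (lv_e F b) = alpha a b *: lv_e F a + alpha b a *: lv_e F b.
Proof.
apply/rowP => j; rewrite lv_mul_entry !sum_mul_lv_e !mxE eqxx /=.
by case: eqP => [->|_]; case: eqP => [->|_]; rewrite /= ?mul0r ?mulr0 ?mul1r ?mulr1.
Qed.

End LVProduct.

Section Derivation.
Variables (F : fieldType) (alpha : 'I_5 -> 'I_5 -> F) (D : 'M[F]_5).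
Hypothesis derD : is_derivation (lv_mul alpha) D.

Lemma derivation_coef a b k :
  alpha a b * D a k + alpha b a * D b k =
  (b == k)%:R * \sum_j alpha k j * D a j + alpha k b * D a k
  + ((a == k)%:R * \sum_j alpha k j * D b j + alpha k a * D b k).
Proof.
have /(congr1 (fun M : 'rV_5 => M 0 k)) := derD (lv_e F a) (lv_e F b).
rewrite /= lv_mul_lv_e mulmxDl -!scalemxAl -!rowE !mxE !lv_mul_entry !sum_mul_lv_e !lv_e_entry.
by rewrite !mxE !sum_mul_row_entry => ->; ring.
Qed.

Lemma derivation_offdiag_relation a b k : k != a -> k != b ->
  (alpha a b - alpha k b) * D a k + (alpha b a - alpha k a) * D b k = 0.
Proof.
move=> nka nkb; have := derivation_coef a b k.
rewrite eq_sym (negbTE nkb) eq_sym (negbTE nka) !mul0r !add0r => E.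
transitivity (alpha a b * D a k + alpha b a * D b k
              - (alpha k b * D a k + alpha k a * D b k)); first ring.
by rewrite E subrr.
Qed.

Hypothesis char2 : (2%:R : F) != 0.

Lemma derivation_row_relation a : \sum_j alpha a j * D a j = 0.
Proof.
have E := derivation_coef a a a; rewrite eqxx mul1r in E.
have : 2%:R * \sum_j alpha a j * D a j = 0.
  by apply: (addrI (alpha a a * D a a + alpha a a * D a a)); rewrite addr0 {2}E; ring.
by move/eqP; rewrite mulf_eq0 (negbTE char2) => /eqP.
Qed.

Lemma derivation_entry_eq0_neighbor a k :
  k != a -> alpha k a != alpha a a -> D a k = 0.
Proof.
move=> nka hne; have := derivation_offdiag_relation nka nka.
rewrite -mulrDl -mulr2n -mulr_natr -mulrA => /eqP.
by rewrite !mulf_eq0 subr_eq0 eq_sym (negbTE hne) (negbTE char2) => /eqP.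
Qed.

Lemma derivation_entry_eq0_transfer a b k : k != a -> k != b ->
  D b k = 0 -> alpha a b != alpha k b -> D a k = 0.
Proof.
move=> nka nkb Dbk hne; have := derivation_offdiag_relation nka nkb.
rewrite Dbk mulr0 addr0 => /eqP.
by rewrite mulf_eq0 subr_eq0 (negbTE hne) => /eqP.
Qed.

Lemma derivation_diag_eq0 a :
  alpha a a != 0 -> (forall j, j != a -> D a j = 0) -> D a a = 0.
Proof.
move=> haa row0; have := derivation_row_relation a.
rewrite (bigD1 a) //= big1 => [|j /row0 ->]; last by rewrite mulr0.
by rewrite addr0 => /eqP; rewrite mulf_eq0 (negbTE haa) => /eqP.
Qed.

End Derivation.

(* [o_i] indexes [e_i]: ordinals start at [0]. *)
Definition o1 : 'I_5 := @Ordinal 5 0 isT.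
Definition o2 : 'I_5 := @Ordinal 5 1 isT.
Definition o3 : 'I_5 := @Ordinal 5 2 isT.
Definition o4 : 'I_5 := @Ordinal 5 3 isT.
Definition o5 : 'I_5 := @Ordinal 5 4 isT.

Lemma ord5_ind (P : 'I_5 -> Prop) :
  P o1 -> P o2 -> P o3 -> P o4 -> P o5 -> forall i, P i.
Proof.
by move=> ? ? ? ? ? [[|[|[|[|[|//]]]]] lti]; rewrite (bool_irrelevance lti isT).
Qed.

Lemma half_neq (F : fieldType) (r : F) : (2%:R : F) != 0 -> r != 2^-1 ->
  [/\ 2^-1 != r, 1 - r != 2^-1 & 2^-1 != 1 - r].
Proof.
move=> char2 hr; have h1 : 1 - r != 2^-1.
  apply: contraNneq hr => E; apply/eqP.
  by rewrite -[r](subKr 1) E; field.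
by split; rewrite // eq_sym.
Qed.

Section ChainAlgebra.
Variables (F : fieldType) (r12 r23 r34 r45 : F).
Hypothesis char2 : (2%:R : F) != 0.
Hypotheses (h12 : r12 != 2^-1) (h23 : r23 != 2^-1)
           (h34 : r34 != 2^-1) (h45 : r45 != 2^-1).
Variable D : 'M[F]_5.
Hypothesis derD : is_derivation (lv_mul (chain_alpha r12 r23 r34 r45)) D.

Lemma chain_alpha_diag i : chain_alpha r12 r23 r34 r45 i i = 2^-1.
Proof. by elim/ord5_ind: i. Qed.

(* Each entry is killed either as a chain neighbour ([N]) or by transfer
   ([T a b k]) from an entry [D b k] killed earlier in the list.  [h21] is
   about [α_21 = 1 - r12]; primed hypotheses have their sides swapped. *)
Lemma chain_derivation_offdiag_eq0 i j : j != i -> D i j = 0.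
Proof.
have [h12' h21 h21'] := half_neq char2 h12.
have [h23' h32 h32'] := half_neq char2 h23.
have [h34' h43 h43'] := half_neq char2 h34.
have [h45' h54 h54'] := half_neq char2 h45.
have N := derivation_entry_eq0_neighbor derD char2.
have T := derivation_entry_eq0_transfer derD.
have d12 : D o1 o2 = 0 := N o1 o2 isT h21.
have d21 : D o2 o1 = 0 := N o2 o1 isT h12.
have d23 : D o2 o3 = 0 := N o2 o3 isT h32.
have d32 : D o3 o2 = 0 := N o3 o2 isT h23.
have d34 : D o3 o4 = 0 := N o3 o4 isT h43.
have d43 : D o4 o3 = 0 := N o4 o3 isT h34.
have d45 : D o4 o5 = 0 := N o4 o5 isT h54.
have d54 : D o5 o4 = 0 := N o5 o4 isT h45.
have d14 : D o1 o4 = 0 := T o1 o3 o4 isT isT d34 h43'.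
have d15 : D o1 o5 = 0 := T o1 o4 o5 isT isT d45 h54'.
have d13 : D o1 o3 = 0 := T o1 o4 o3 isT isT d43 h34'.
have d24 : D o2 o4 = 0 := T o2 o5 o4 isT isT d54 h45'.
have d25 : D o2 o5 = 0 := T o2 o4 o5 isT isT d45 h54'.
have d41 : D o4 o1 = 0 := T o4 o2 o1 isT isT d21 h12'.
have d42 : D o4 o2 = 0 := T o4 o1 o2 isT isT d12 h21'.
have d51 : D o5 o1 = 0 := T o5 o2 o1 isT isT d21 h12'.
have d52 : D o5 o2 = 0 := T o5 o1 o2 isT isT d12 h21'.
have d53 : D o5 o3 = 0 := T o5 o2 o3 isT isT d23 h32'.
have d35 : D o3 o5 = 0 := T o3 o2 o5 isT isT d25 h32.
have d31 : D o3 o1 = 0 := T o3 o4 o1 isT isT d41 h34.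
by elim/ord5_ind: i; elim/ord5_ind: j => // /eqP.
Qed.

End ChainAlgebra.

Theorem mainTheorem14 (F : fieldType) (char2 : (2%:R : F) != 0)
    (r12 r23 r34 r45 : F)
    (h12 : r12 != 2^-1) (h23 : r23 != 2^-1)
    (h34 : r34 != 2^-1) (h45 : r45 != 2^-1)
    (D : 'M[F]_5) :
  is_derivation (lv_mul (chain_alpha r12 r23 r34 r45)) D -> D = 0.
Proof.
move=> derD.
have off := chain_derivation_offdiag_eq0 char2 h12 h23 h34 h45 derD.
have diag i : D i i = 0.
  apply: (derivation_diag_eq0 derD char2) => [|j]; last exact: off.
  by rewrite chain_alpha_diag invr_eq0.
apply/matrixP => i j; rewrite mxE.
by case: (eqVneq j i) => [->|/off //]; apply: diag.
Qed.
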